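(* Let $\rho$ be an $n$-qubit density matrix and define $\vec z\in\mathbb{C}^n$ by $z_i=\langle e_i|\rho|0^n\rangle$. If $\vec a\in\mathbb{C}^n$ satisfies $\|\vec a-\vec z\|_2\le\|\vec a\|_2/2$, then \[ \langle\pi_{\vec a/10}|\rho|\pi_{\vec a/10}\rangle\ge\langle0^n|\rho|0^n\rangle+\frac{\|\vec a\|_2^2}{20}. \]
   Context: For $\vec w\in\mathbb{C}^n$, $|\pi_{\vec w}\rangle=\bigotimes_{i=1}^n\frac{|0\rangle+w_i|1\rangle}{\sqrt{1+|w_i|^2}}$. $|e_i\rangle$ denotes the $n$-qubit computational basis state with $|1\rangle$ in position $i$ and $|0\rangle$ elsewhere. *)

(* Complex scalars: an arbitrary numClosedFieldType C
   (e.g. complex numbers); 'M[C]_(2^n) are n-qubit operators. *)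
From mathcomp Require Import all_boot all_order all_algebra.
Set Implicit Arguments. Unset Strict Implicit. Unset Printing Implicit Defensive.
Import Order.TTheory GRing.Theory Num.Theory Num.Def.
Local Open Scope ring_scope.

Section Qubits.
Variable C : numClosedFieldType.
Variable n : nat.

(* Computational basis state |x_1...x_n>  <->  index k : 'I_(2^n) with
   x_{i} = bit i of k (binary expansion). *)
Definition qbit (k : 'I_(2^n)) (i : 'I_n) : bool := odd (k %/ 2 ^ i).

Lemma idx0_proof : (0 < 2 ^ n)%N.
Proof. by rewrite expn_gt0. Qed.

Definition idx0 : 'I_(2^n) := Ordinal idx0_proof.

Lemma e_idx_proof (i : 'I_n) : (2 ^ i < 2 ^ n)%N.
Proof. by rewrite ltn_exp2l. Qed.

(* index of |e_i> : the basis state with 1 in position i and 0 elsewhere *)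
Definition e_idx (i : 'I_n) : 'I_(2^n) := Ordinal (e_idx_proof i).

Definition expval (A : 'M[C]_(2^n)) (psi : 'cV[C]_(2^n)) : C :=
  \sum_(k < 2^n) \sum_(l < 2^n) (psi k 0)^* * A k l * psi l 0.

Definition density_matrix (rho : 'M[C]_(2^n)) : Prop :=
  [/\ forall k l, rho l k = (rho k l)^*,
      forall psi : 'cV[C]_(2^n), 0 <= expval rho psi
    & \tr rho = 1].

Definition pi_state (w : 'I_n -> C) : 'cV[C]_(2^n) :=
  \col_(k < 2^n) \prod_(i < n)
     ((if qbit k i then w i else 1) / sqrtC (1 + `|w i| ^+ 2)).

Definition norm2 (v : 'I_n -> C) : C := sqrtC (\sum_(i < n) `|v i| ^+ 2).

End Qubits.

(* Up to normalisation, |pi_b> is f = sum_x (prod_i b_i^(x_i)) |x>, whose squared norm is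
   P = prod_i (1 + |b_i|^2).  Split f = u + w into its part u = |0^n> + sum_i b_i |e_i> of
   Hamming weight at most one and the rest w.  Then <u|rho|u> >= rho_00 + 2 Re <b, z>, and
   2 Re <b, z> >= 10 X because a is close to z, where X = |b|^2 = |a|^2 / 100.  Since rho <= 1,
   <w|rho|w> <= |w|^2 = P - 1 - X, which is O(X^2), and positivity of rho on u + t w for
   real t bounds the cross term by X.  Finally |a| <= 2 (because sum_i |z_i|^2 <= rho_00, as
   rho^2 <= rho), so X <= 1/25 and dividing by P <= 1 / (1 - X) keeps half of the gain. *)

From mathcomp Require Import all_boot all_order all_algebra ring.
Import Order.TTheory GRing.Theory Num.Theory.
Set Implicit Arguments. Unset Strict Implicit. Unset Printing Implicit Defensive.

Lemma nat_bits_inj n m m' : m < 2 ^ n -> m' < 2 ^ n ->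
  (forall i, i < n -> odd (m %/ 2 ^ i) = odd (m' %/ 2 ^ i)) -> m = m'.
Proof.
elim: n m m' => [|n IH] m m'; first by rewrite !ltnS !leqn0 => /eqP -> /eqP ->.
move=> ltm ltm' eq_bits.
have eq_odd := eq_bits 0 isT; rewrite expn0 !divn1 in eq_odd.
have eq_half : m %/ 2 = m' %/ 2.
  apply: IH; rewrite ?ltn_divLR // ?(mulnC _ 2) -?expnS //.
  by move=> i lti; rewrite -!divnMA -expnS; apply: eq_bits.
by rewrite -(odd_double_half m) -(odd_double_half m') -!divn2 eq_odd eq_half.
Qed.

Local Open Scope ring_scope.

Section Bits.
Variable n : nat.

Lemma qbit_inj : injective (fun k : 'I_(2 ^ n) => [ffun i : 'I_n => qbit k i]).
Proof.
move=> k k' /ffunP eq_bits; apply/val_inj/(@nat_bits_inj n); rewrite ?ltn_ord //.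
by move=> i lti; have := eq_bits (Ordinal lti); rewrite !ffunE.
Qed.

Lemma sum_prod_qbit (R : comNzRingType) (G : 'I_n -> bool -> R) :
  \sum_(k < 2 ^ n) \prod_i G i (qbit k i) = \prod_i (G i true + G i false).
Proof.
have bits_bij : bijective (fun k : 'I_(2 ^ n) => [ffun i : 'I_n => qbit k i]).
  by apply: inj_card_bij; [exact: qbit_inj | rewrite card_ffun !card_ord card_bool].
under eq_bigr do rewrite -big_bool.
rewrite bigA_distr_bigA (reindex _ (onW_bij _ bits_bij)) /=.
by apply: eq_bigr => k _; apply: eq_bigr => i _; rewrite ffunE.
Qed.

Lemma qbit_idx0 (i : 'I_n) : qbit (idx0 n) i = false.
Proof. by rewrite /qbit /= div0n. Qed.

Lemma qbit_e_idx (i j : 'I_n) : qbit (e_idx j) i = (i == j).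
Proof.
rewrite /qbit /= -val_eqE /=; case: (leqP i j) => [le_ij | lt_ji].
  by rewrite -expnB // oddX orbF subn_eq0 eqn_leq le_ij.
by rewrite divn_small ?ltn_exp2l // gtn_eqF.
Qed.

Lemma e_idx_inj : injective (@e_idx n).
Proof. by move=> i j /(congr1 val) /expnI eq_ij; apply: val_inj; apply: eq_ij. Qed.

Lemma e_idx_neq0 (i : 'I_n) : e_idx i != idx0 n.
Proof. by rewrite -val_eqE /= -lt0n expn_gt0. Qed.

End Bits.

Lemma prod1D_mul1B_sum_le1 (F : numFieldType) (I : Type) (r : seq I) (x : I -> F) :
  (forall i, 0 <= x i) -> (\prod_(i <- r) (1 + x i)) * (1 - \sum_(i <- r) x i) <= 1.
Proof.
move=> x_ge0; elim: r => [|i r IH]; first by rewrite !big_nil subr0 mulr1.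
rewrite !big_cons; set P := \prod_(j <- r) _; set S := \sum_(j <- r) _.
have P_ge0 : 0 <= P by apply: prodr_ge0 => j _; rewrite addr_ge0.
have S_ge0 : 0 <= S by apply: sumr_ge0.
apply: le_trans IH.
have -> : (1 + x i) * P * (1 - (x i + S)) = P * (1 - S) - P * (x i ^+ 2 + x i * S) by ring.
by rewrite lerBlDr lerDl mulr_ge0 // addr_ge0 ?exprn_ge0 ?mulr_ge0.
Qed.

Lemma real_quadratic_ge0_cross_lb (F : numFieldType) (q R m X : F) :
  0 <= q -> 0 <= X -> (1 - X) * m <= X ^+ 2 -> R \is Num.real ->
  (forall t, t \is Num.real -> 0 <= t ^+ 2 * q + t * R + m) ->
  (1 - X) * q - X <= q + R + m.
Proof.
move=> q_ge0 X_ge0 mX R_real quad_ge0.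
have [X0 | X_neq0] := eqVneq X 0.
  (* then [m = 0], and a quadratic that stays nonnegative without constant term has [R = 0] *)
  have m0 : m = 0.
    apply/eqP; rewrite eq_le -{1}(mul1r m) -{1}(subr0 1) -X0 (le_trans mX) ?X0 ?expr0n //=.
    by have := quad_ge0 0; rewrite expr0n !mul0r !add0r; apply; rewrite real0.
  have q1_neq0 : q + 1 != 0 by rewrite gt_eqF // ltr_wpDl.
  have R0 : R = 0.
    have t_real : - R / (q + 1) \is Num.real.
      by rewrite rpredM ?rpredN // rpredV ger0_real // addr_ge0.
    have := quad_ge0 _ t_real; rewrite m0 addr0.
    have -> : (- R / (q + 1)) ^+ 2 * q + - R / (q + 1) * R = - (R / (q + 1)) ^+ 2 by field.
    rewrite oppr_ge0 => sqr_le0; apply/eqP.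
    suff : R / (q + 1) == 0 by rewrite mulf_eq0 invr_eq0 (negbTE q1_neq0) orbF.
    rewrite -sqrf_eq0 eq_le sqr_le0 /= -real_normK ?exprn_ge0 //.
    by rewrite rpredM // rpredV ger0_real // addr_ge0.
  by rewrite X0 m0 R0 !subr0 mul1r !addr0.
have X_gt0 : 0 < X by rewrite lt_def X_neq0.
rewrite -(ler_pM2l X_gt0) -subr_ge0.
have -> : X * (q + R + m) - X * ((1 - X) * q - X)
    = (X ^+ 2 * q + X * R + m) + (X ^+ 2 - (1 - X) * m) by ring.
by rewrite addr_ge0 ?subr_ge0 // quad_ge0 // ger0_real.
Qed.

(* [P * (1 - X) <= 1] bounds the squared norm of the unnormalised state *)
Lemma gain_bound (F : numFieldType) (p q X P : F) :
  0 <= p -> p <= 1 -> 0 <= X -> X <= 25^-1 -> p + 10 * X <= q -> P * (1 - X) <= 1 ->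
  P * (p + 5 * X) <= (1 - X) * q - X.
Proof.
move=> p_ge0 p_le1 X_ge0 X_small q_ge PX_le1.
have X_lt1 : X < 1 by rewrite (le_lt_trans X_small) // invf_lt1 ?ltr1n ?ltr0n.
have X1_gt0 : 0 < 1 - X by rewrite subr_gt0.
have q_lb : (1 - X) * (p + 10 * X) - X <= (1 - X) * q - X.
  by rewrite lerD2r ler_pM2l.
apply: le_trans q_lb.
rewrite -(ler_pM2l X1_gt0) mulrA [_ * P]mulrC.
apply: (@le_trans _ _ (p + 5 * X)).
  by apply: ler_piMl; rewrite // addr_ge0 // mulr_ge0 // ler0n.
rewrite -subr_ge0.
have -> : (1 - X) * ((1 - X) * (p + 10 * X) - X) - (p + 5 * X)
    = X * ((1 - p) * (2 - X) + (2 - 18 * X) + 10 * X ^+ 2) by ring.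
have le18 : 18 * X <= 2.
  rewrite (le_trans (ler_wpM2l _ X_small)) ?ler0n // ler_pdivrMr ?ltr0n //.
  by rewrite -natrM ler_nat.
have pX_ge0 : 0 <= (1 - p) * (2 - X).
  by rewrite mulr_ge0 ?subr_ge0 // (le_trans (ltW X_lt1)) ?ler1n.
by rewrite mulr_ge0 // addr_ge0 ?mulr_ge0 ?exprn_ge0 ?ler0n // addr_ge0 // subr_ge0.
Qed.

Section CloseVectors.
Variables (C : numClosedFieldType) (I : finType) (a z : I -> C).
Hypothesis dist_le : \sum_i `|a i - z i| ^+ 2 <= (\sum_i `|a i| ^+ 2) / 4.

Lemma inner_ge_of_dist_le :
  \sum_i `|a i| ^+ 2 <= \sum_i (a i)^* * z i + (\sum_i (a i)^* * z i)^*.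
Proof.
have expand i : `|a i - z i| ^+ 2 = `|z i - a i / 2| ^+ 2
    + (3 / 4 * `|a i| ^+ 2 - ((a i)^* * z i + ((a i)^* * z i)^*) / 2).
  rewrite !normCK !(rmorphB, rmorphM, rmorphD, fmorphV, rmorph_nat) /= !conjCK.
  by field; rewrite ?pnatr_eq0.
set s2 := \sum_i `|a i| ^+ 2; set g := \sum_i (a i)^* * z i.
move: dist_le; under eq_bigr do rewrite expand.
rewrite big_split /= sumrB -mulr_sumr -mulr_suml big_split /= -rmorph_sum -/s2 -/g.
move=> /(le_trans _) h; have {}h : 3 / 4 * s2 - (g + g^*) / 2 <= s2 / 4.
  by apply/h/ler_wpDl => //; apply: sumr_ge0 => i _; rewrite exprn_ge0.
rewrite -subr_ge0 -(pmulr_rge0 _ (_ : 0 < 2^-1)) ?invr_gt0 ?ltr0n //.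
have -> : 2^-1 * (g + g^* - s2) = s2 / 4 - (3 / 4 * s2 - (g + g^*) / 2) by field; rewrite ?pnatr_eq0.
by rewrite subr_ge0.
Qed.

Lemma sum_norm_le4_of_dist_le : \sum_i `|z i| ^+ 2 <= 1 -> \sum_i `|a i| ^+ 2 <= 4.
Proof.
move=> z_le1; set s2 := \sum_i _.
have parallelogram i : `|a i| ^+ 2 <= 2 * `|a i - z i| ^+ 2 + 2 * `|z i| ^+ 2.
  rewrite -subr_ge0.
  have -> : 2 * `|a i - z i| ^+ 2 + 2 * `|z i| ^+ 2 - `|a i| ^+ 2 = `|a i - 2 * z i| ^+ 2.
    by rewrite !normCK !(rmorphB, rmorphM, rmorph_nat) /=; ring.
  exact: exprn_ge0.
have : s2 <= 2 * (s2 / 4) + 2 * 1.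
  apply: le_trans (ler_sum _ (fun i _ => parallelogram i)) _.
  by rewrite big_split /= -!mulr_sumr lerD ?ler_wpM2l ?ler0n.
rewrite -subr_ge0 => h; rewrite -subr_ge0.
have -> : 4 - s2 = 2 * (2 * (s2 / 4) + 2 * 1 - s2) by field; rewrite ?pnatr_eq0.
by rewrite mulr_ge0 ?ler0n.
Qed.

End CloseVectors.

Section DensityForm.
Variables (C : numClosedFieldType) (N : nat) (rho : 'M[C]_N).

Definition form (x y : 'cV[C]_N) : C := \sum_k \sum_l (x k 0)^* * rho k l * y l 0.

Hypothesis rho_herm : forall k l, rho l k = (rho k l)^*.
Hypothesis rho_psd : forall x, 0 <= form x x.
Hypothesis rho_tr1 : \tr rho = 1.

Lemma form_conj x y : form y x = (form x y)^*.
Proof.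
rewrite /form exchange_big rmorph_sum; apply: eq_bigr => k _.
rewrite rmorph_sum; apply: eq_bigr => l _.
by rewrite !rmorphM /= conjCK -rho_herm; ring.
Qed.

Lemma formDl x x' y : form (x + x') y = form x y + form x' y.
Proof.
rewrite /form -big_split; apply: eq_bigr => k _; rewrite -big_split.
by apply: eq_bigr => l _; rewrite mxE rmorphD /= !mulrDl.
Qed.

Lemma formDr x y y' : form x (y + y') = form x y + form x y'.
Proof.
rewrite /form -big_split; apply: eq_bigr => k _; rewrite -big_split.
by apply: eq_bigr => l _; rewrite mxE mulrDr.
Qed.

Lemma formZl c x y : form (c *: x) y = c^* * form x y.
Proof.
rewrite /form mulr_sumr; apply: eq_bigr => k _; rewrite mulr_sumr.
by apply: eq_bigr => l _; rewrite mxE rmorphM /= !mulrA.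
Qed.

Lemma formZr c x y : form x (c *: y) = c * form x y.
Proof.
rewrite /form mulr_sumr; apply: eq_bigr => k _; rewrite mulr_sumr.
by apply: eq_bigr => l _; rewrite mxE mulrCA mulrA.
Qed.

Lemma form_delta_r x j : form x (delta_mx j 0) = \sum_k (x k 0)^* * rho k j.
Proof.
apply: eq_bigr => k _; rewrite (bigD1 j) //= big1 ?addr0 => [|l /negbTE neq_lj].
  by rewrite mxE !eqxx mulr1.
by rewrite mxE neq_lj mulr0.
Qed.

Lemma form_delta i j : form (delta_mx i 0) (delta_mx j 0) = rho i j.
Proof.
rewrite form_delta_r (bigD1 i) //= big1 ?addr0 => [|k /negbTE neq_ki].
  by rewrite mxE !eqxx rmorph1 mul1r.
by rewrite mxE neq_ki rmorph0 mul0r.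
Qed.

Lemma diag_ge0 k : 0 <= rho k k.
Proof. by rewrite -form_delta rho_psd. Qed.

Lemma form_quadratic_ge0 x y t : t \is Num.real ->
  0 <= t ^+ 2 * form x x + t * (form x y + form y x) + form y y.
Proof.
move=> t_real; have := rho_psd (t *: x + y).
rewrite !(formDl, formDr, formZl, formZr) (conj_Creal t_real).
by congr (_ <= _); ring.
Qed.

Lemma norm_offdiag_le k l (p q : C) : 0 <= p -> 0 <= q ->
  2 * p * q * `|rho k l| <= p ^+ 2 * rho l l + q ^+ 2 * rho k k.
Proof.
move=> p_ge0 q_ge0; set r := `|rho k l|.
have [r0 | r_neq0] := eqVneq r 0.
  by rewrite r0 mulr0 addr_ge0 // mulr_ge0 ?exprn_ge0 ?diag_ge0.
have rho_neq0 : rho k l != 0 by rewrite -normr_eq0.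
have conj_rho : (rho k l)^* = r ^+ 2 / rho k l by rewrite normCK mulrAC divff // mul1r.
(* [c] aligns the phase of the cross terms with [-p q r] *)
set c := - (p * (rho k l)^* / r).
have conj_c : c^* = - (p * rho k l / r).
  by rewrite rmorphN rmorphM fmorphV /= rmorphM /= conjCK (geC0_conj p_ge0) (geC0_conj (normr_ge0 _)).
have := rho_psd (q *: delta_mx k 0 + c *: delta_mx l 0).
rewrite !(formDl, formDr, formZl, formZr) !form_delta conj_c (geC0_conj q_ge0) (rho_herm k l).
rewrite /c conj_rho.
have -> : q * (q * rho k k + - (p * (r ^+ 2 / rho k l) / r) * rho k l)
    + (q * (- (p * rho k l / r) * (r ^+ 2 / rho k l))
    + - (p * rho k l / r) * (- (p * (r ^+ 2 / rho k l) / r) * rho l l))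
    = p ^+ 2 * rho l l + q ^+ 2 * rho k k - 2 * p * q * r by field; rewrite r_neq0.
by rewrite subr_ge0.
Qed.

Lemma form_le_norm x : form x x <= \sum_k `|x k 0| ^+ 2.
Proof.
set s := \sum_k _.
have tr_sum : \sum_k rho k k = 1 by rewrite -rho_tr1.
have pair_bound k l : `|(x k 0)^* * rho k l * x l 0|
    <= (`|x k 0| ^+ 2 * rho l l + `|x l 0| ^+ 2 * rho k k) / 2.
  rewrite ler_pdivlMr ?ltr0n // !normrM norm_conjC mulrC !mulrA.
  by rewrite mulrAC; apply: norm_offdiag_le.
rewrite -(ger0_norm (rho_psd x)).
apply: le_trans (ler_norm_sum _ _ _) _.
apply: le_trans (ler_sum _ (fun k _ => ler_norm_sum _ _ _)) _.
apply: le_trans (ler_sum _ (fun k _ => ler_sum _ (fun l _ => pair_bound k l))) _.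
under eq_bigr do rewrite -mulr_suml big_split /= -mulr_sumr -mulr_suml tr_sum mulr1.
rewrite -mulr_suml big_split /= -mulr_sumr tr_sum mulr1 -/s.
by rewrite mulrDl -splitr.
Qed.

(* [rho <= 1] gives [rho^2 <= rho]; this is its [(j, j)] entry *)
Lemma sum_col_norm_le_diag j : \sum_k `|rho k j| ^+ 2 <= rho j j.
Proof.
set col := \col_k rho k j; set s := \sum_k _.
have col_delta : form col (delta_mx j 0) = s.
  by rewrite form_delta_r; apply: eq_bigr => k _; rewrite mxE normCK mulrC.
have s_real : s \is Num.real by rewrite ger0_real // sumr_ge0 // => k _; rewrite exprn_ge0.
have col_le : form col col <= s.
  by rewrite (le_trans (form_le_norm col)) //; under eq_bigr do rewrite mxE.
have h := form_quadratic_ge0 col (delta_mx j 0) (rpredN1 _).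
rewrite (form_conj col (delta_mx j 0)) col_delta (conj_Creal s_real) form_delta in h.
rewrite sqrrN expr1n mul1r mulN1r in h.
rewrite -subr_ge0 (le_trans h) //.
have -> : rho j j - s = s - (s + s) + rho j j by ring.
by rewrite !lerD2r.
Qed.

Lemma diag_le1 k : rho k k <= 1.
Proof.
rewrite -rho_tr1 /mxtrace (bigD1 k) //= lerDl.
by apply: sumr_ge0 => l _; apply: diag_ge0.
Qed.

End DensityForm.

Definition mask (C : numClosedFieldType) N (A : {set 'I_N}) (x : 'cV[C]_N) : 'cV[C]_N :=
  \col_k (if k \in A then x k 0 else 0).

Lemma maskE (C : numClosedFieldType) N (A : {set 'I_N}) (x : 'cV[C]_N) k :
  mask A x k 0 = if k \in A then x k 0 else 0.
Proof. by rewrite mxE. Qed.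

Lemma mask_addC (C : numClosedFieldType) N (A : {set 'I_N}) (x : 'cV[C]_N) :
  mask A x + mask (~: A) x = x.
Proof.
by apply/matrixP => k j; rewrite ord1 !mxE inE; case: (k \in A); rewrite ?addr0 ?add0r.
Qed.

Lemma sum_norm_mask (C : numClosedFieldType) N (A : {set 'I_N}) (x : 'cV[C]_N) :
  \sum_k `|mask A x k 0| ^+ 2 = \sum_(k in A) `|x k 0| ^+ 2.
Proof.
by rewrite [RHS]big_mkcond; apply: eq_bigr => k _; rewrite maskE; case: ifP; rewrite ?normr0 ?expr0n.
Qed.

Lemma sum_norm_maskC (C : numClosedFieldType) N (A : {set 'I_N}) (x : 'cV[C]_N) :
  \sum_k `|mask (~: A) x k 0| ^+ 2 = \sum_k `|x k 0| ^+ 2 - \sum_(k in A) `|x k 0| ^+ 2.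
Proof.
rewrite sum_norm_mask [X in _ = X - _](bigID (mem A)) /= addrC addrK.
by apply: eq_bigl => k; rewrite inE.
Qed.

Section Qubits.
Variables (C : numClosedFieldType) (n : nat).
Implicit Types b : 'I_n -> C.

Definition prod_state b : 'cV[C]_(2 ^ n) :=
  \col_k \prod_i (if qbit k i then b i else 1).

Lemma pi_state_prod b :
  pi_state b = (\prod_i sqrtC (1 + `|b i| ^+ 2))^-1 *: prod_state b.
Proof. by apply/matrixP => k j; rewrite !mxE prodf_div mulrC. Qed.

Lemma prod_state_idx0 b : prod_state b (idx0 n) 0 = 1.
Proof. by rewrite /prod_state mxE big1 // => i _; rewrite qbit_idx0. Qed.

Lemma prod_state_e_idx b j : prod_state b (e_idx j) 0 = b j.
Proof.
rewrite /prod_state mxE (bigD1 j) //= qbit_e_idx eqxx big1 ?mulr1 // => i /negbTE neq_ij.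
by rewrite qbit_e_idx neq_ij.
Qed.

Lemma sum_norm_prod_state b :
  \sum_k `|prod_state b k 0| ^+ 2 = \prod_i (1 + `|b i| ^+ 2).
Proof.
transitivity (\prod_i (`|b i| ^+ 2 + `|1 : C| ^+ 2)); last first.
  by apply: eq_bigr => i _; rewrite normr1 expr1n addrC.
have := sum_prod_qbit (fun i (bit : bool) => `|if bit then b i else 1| ^+ 2).
rewrite /= => <-.
by apply: eq_bigr => k _; rewrite /prod_state mxE normr_prod -prodrXl.
Qed.

Lemma norm2_ge0 (v : 'I_n -> C) : 0 <= norm2 v.
Proof. by rewrite sqrtC_ge0 sumr_ge0 // => i _; rewrite exprn_ge0. Qed.

Lemma norm2_sqr (v : 'I_n -> C) : norm2 v ^+ 2 = \sum_i `|v i| ^+ 2.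
Proof. exact: sqrtCK. Qed.

Definition weight1 : {set 'I_(2 ^ n)} := [set e_idx i | i : 'I_n].
Definition low_weight : {set 'I_(2 ^ n)} := idx0 n |: weight1.

Lemma sum_weight1 (G : 'I_(2 ^ n) -> C) :
  \sum_(k in weight1) G k = \sum_i G (e_idx i).
Proof. by rewrite big_imset //; move=> i j _ _; apply: e_idx_inj. Qed.

Lemma idx0_notin_weight1 : idx0 n \notin weight1.
Proof. by apply/imsetP => -[i _ /eqP]; rewrite eq_sym (negbTE (e_idx_neq0 i)). Qed.

Lemma sum_low_weight (G : 'I_(2 ^ n) -> C) :
  \sum_(k in low_weight) G k = G (idx0 n) + \sum_i G (e_idx i).
Proof. by rewrite big_setU1 /= ?idx0_notin_weight1 ?sum_weight1. Qed.

Variable rho : 'M[C]_(2 ^ n).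
Hypothesis rho_herm : forall k l, rho l k = (rho k l)^*.
Hypothesis rho_psd : forall x, 0 <= form rho x x.
Hypothesis rho_tr1 : \tr rho = 1.

Let p := rho (idx0 n) (idx0 n).

Lemma expval_form psi : expval rho psi = form rho psi psi.
Proof. by []. Qed.

Lemma sum_col_weight1_le : \sum_i `|rho (e_idx i) (idx0 n)| ^+ 2 <= p.
Proof.
rewrite -(sum_weight1 (fun k => `|rho k (idx0 n)| ^+ 2)).
apply: le_trans (sum_col_norm_le_diag rho_herm rho_psd rho_tr1 _).
rewrite [leLHS]big_mkcond ler_sum // => k _.
by case: ifP => // _; rewrite exprn_ge0.
Qed.

Lemma form_low_weight_ge b (g := \sum_i (b i)^* * rho (e_idx i) (idx0 n)) :
  p + (g + g^*) <= form rho (mask low_weight (prod_state b)) (mask low_weight (prod_state b)).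
Proof.
set f := prod_state b; set v := mask weight1 f.
set e0 : 'cV[C]_(2 ^ n) := delta_mx (idx0 n) 0.
have -> : mask low_weight f = e0 + v.
  apply/matrixP => k j; rewrite ord1 maskE [RHS]mxE maskE [e0 _ _]mxE !inE eqxx andbT.
  have [-> | neq_k0] := eqVneq k (idx0 n); last by rewrite add0r.
  by rewrite (negbTE idx0_notin_weight1) prod_state_idx0 addr0.
have v_e0 : form rho v e0 = g.
  transitivity (\sum_(k in weight1) (f k 0)^* * rho k (idx0 n)).
    rewrite form_delta_r [RHS]big_mkcond; apply: eq_bigr => k _.
    by rewrite maskE; case: ifP => // _; rewrite rmorph0 mul0r.
  by rewrite sum_weight1; apply: eq_bigr => i _; rewrite prod_state_e_idx.
rewrite !(formDl, formDr) form_delta (form_conj rho_herm v e0) !v_e0 -subr_ge0.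
have -> : p + g^* + (g + form rho v v) - (p + (g + g^*)) = form rho v v by ring.
exact: rho_psd.
Qed.

Lemma tail_form_le b (X := \sum_i `|b i| ^+ 2) : X <= 1 ->
  (1 - X) * form rho (mask (~: low_weight) (prod_state b)) (mask (~: low_weight) (prod_state b))
    <= X ^+ 2.
Proof.
move=> X_le1; set w := mask _ _.
have norm_w : \sum_k `|w k 0| ^+ 2 = \prod_i (1 + `|b i| ^+ 2) - (1 + X).
  rewrite sum_norm_maskC sum_norm_prod_state sum_low_weight prod_state_idx0 normr1 expr1n.
  by congr (_ - (1 + _)); apply: eq_bigr => i _; rewrite prod_state_e_idx.
have X_ge0 : 0 <= X by apply: sumr_ge0 => i _; rewrite exprn_ge0.
apply: le_trans (ler_wpM2l _ (form_le_norm rho_herm rho_psd rho_tr1 w)) _; first by rewrite subr_ge0.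
rewrite norm_w -subr_ge0.
have -> : X ^+ 2 - (1 - X) * (\prod_i (1 + `|b i| ^+ 2) - (1 + X))
    = 1 - \prod_i (1 + `|b i| ^+ 2) * (1 - X) by ring.
by rewrite subr_ge0 prod1D_mul1B_sum_le1 // => i; rewrite exprn_ge0.
Qed.

Lemma expval_pi_state_ge b (X := \sum_i `|b i| ^+ 2)
    (g := \sum_i (b i)^* * rho (e_idx i) (idx0 n)) :
  X <= 25^-1 -> 10 * X <= g + g^* -> p + 5 * X <= expval rho (pi_state b).
Proof.
move=> X_small gain.
set f := prod_state b; set u := mask low_weight f; set w := mask (~: low_weight) f.
set P := \prod_i (1 + `|b i| ^+ 2).
have X_ge0 : 0 <= X by apply: sumr_ge0 => i _; rewrite exprn_ge0.
have P_gt0 : 0 < P by apply: prodr_gt0 => i _; rewrite ltr_wpDr ?exprn_ge0.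
have expval_f : expval rho (pi_state b) = form rho f f / P.
  set c := (\prod_i sqrtC (1 + `|b i| ^+ 2))^-1.
  have c_ge0 : 0 <= c by rewrite invr_ge0 prodr_ge0 // => i _; rewrite sqrtC_ge0 addr_ge0 ?exprn_ge0.
  rewrite expval_form pi_state_prod -/c formZl formZr (geC0_conj c_ge0).
  rewrite mulrA -expr2 exprVn -prodrXl mulrC.
  by congr (_ / _); apply: eq_bigr => i _; rewrite sqrtCK.
have f_split : form rho f f = form rho u u + (form rho u w + form rho w u) + form rho w w.
  by rewrite -(mask_addC low_weight f) -/u -/w !(formDl, formDr); ring.
have cross_real : form rho u w + form rho w u \is Num.real.
  by rewrite CrealE (form_conj rho_herm u w) rmorphD /= conjCK addrC.
have q_ge : p + 10 * X <= form rho u u.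
  by apply: le_trans (form_low_weight_ge b); rewrite lerD2l.
have X_le1 : X <= 1 by rewrite (le_trans X_small) // invf_le1 ?ler1n ?ltr0n.
have cross := real_quadratic_ge0_cross_lb (rho_psd u) X_ge0 (tail_form_le X_le1) cross_real
  (fun t t_real => form_quadratic_ge0 rho_psd u w t_real).
have := gain_bound (diag_ge0 rho_psd _) (diag_le1 rho_psd rho_tr1 _) X_ge0 X_small q_ge
  (prod1D_mul1B_sum_le1 _ (fun i => exprn_ge0 2 (normr_ge0 (b i)))).
by rewrite expval_f ler_pdivlMr // mulrC f_split => /le_trans; apply.
Qed.

End Qubits.

Theorem theorem4p9 (C : numClosedFieldType) (n : nat) (rho : 'M[C]_(2^n))
    (a : 'I_n -> C) :
  density_matrix rho ->
  let z := fun i : 'I_n => rho (e_idx i) (idx0 n) in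
  norm2 (fun i => a i - z i) <= norm2 a / 2 ->
  expval rho (pi_state (fun i => a i / 10))
    >= rho (idx0 n) (idx0 n) + norm2 a ^+ 2 / 20.
Proof.
move=> [rho_herm rho_psd rho_tr1] z dist_le.
set s2 := \sum_i `|a i| ^+ 2.
have dist_sq : \sum_i `|a i - z i| ^+ 2 <= s2 / 4.
  have := ler_pM (norm2_ge0 _) (norm2_ge0 _) dist_le dist_le.
  by rewrite -!expr2 expr_div_n !norm2_sqr -natrX.
have z_le1 : \sum_i `|z i| ^+ 2 <= 1.
  exact: le_trans (sum_col_weight1_le rho_herm rho_psd rho_tr1) (diag_le1 rho_psd rho_tr1 _).
have X_eq : \sum_i `|a i / 10| ^+ 2 = s2 / 100.
  rewrite mulr_suml; apply: eq_bigr => i _.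
  by rewrite normf_div normr_nat expr_div_n -natrX.
have g_eq : \sum_i (a i / 10)^* * z i = (\sum_i (a i)^* * z i) / 10.
  by rewrite mulr_suml; apply: eq_bigr => i _; rewrite rmorphM fmorphV rmorph_nat mulrAC.
have -> : norm2 a ^+ 2 / 20 = 5 * (s2 / 100) by rewrite norm2_sqr -/s2; field; rewrite ?pnatr_eq0.
rewrite -X_eq; apply: (expval_pi_state_ge rho_herm rho_psd rho_tr1 (b := fun i => a i / 10)); rewrite /= X_eq.
  have -> : (25^-1 : C) = 4 / 100 by field; rewrite ?pnatr_eq0.
  by rewrite ler_pM2r ?invr_gt0 ?ltr0n // (sum_norm_le4_of_dist_le dist_sq z_le1).
rewrite g_eq rmorphM fmorphV rmorph_nat -mulrDl.
have -> : 10 * (s2 / 100) = s2 / 10 by field; rewrite ?pnatr_eq0.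
by rewrite ler_pM2r ?invr_gt0 ?ltr0n // (inner_ge_of_dist_le dist_sq).
Qed.
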